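(* Let $d\in\mathbb{N}$, $r\in\mathbb{N}$ with $r\ge2$, and set $\delta=r^{-7/2}$, $\sigma=\sqrt{\log(1/\delta)}/r$, $\gamma=\sqrt{\tfrac52\log r}$, $R=1+\gamma(2+\sqrt2)\sqrt d\,\sigma$, $b=(R+1)^2/(4\sigma^2)$, with $K_r$ as in the context. Then \[ \left|K_r(x,y)-\frac1{\sqrt{2\pi}\sigma}\exp\!\left(-\frac{(x-y)^2}{2\sigma^2}\right)\right|\le\frac{3\delta}{\sqrt{2\pi}\sigma}\qquad\forall x\in[-1,1],\ \forall y\in[-R,R]. \]
   Context: $s_{b,\delta}$ is a univariate polynomial of degree $\lceil\sqrt{2\theta\log(4/\delta)}\rceil$, $\theta=\lceil\max\{\tfrac12be^2,\log(2/\delta)\}\rceil$, with $|e^{-t}-s_{b,\delta}(t)|\le\delta$ for all $t\in[0,b]$. $K_r(x,y)=\frac1{\sqrt{2\pi}\sigma}s_{b,\delta}^2\!\left(\frac{(x-y)^2}{4\sigma^2}\right)$. $\log$ is the natural logarithm. *)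

From HB Require Import structures.
From mathcomp Require Import all_boot all_order all_algebra.
From mathcomp Require Import all_classical all_reals all_analysis.
Set Implicit Arguments. Unset Strict Implicit. Unset Printing Implicit Defensive.
Import Order.TTheory GRing.Theory Num.Theory.
Local Open Scope ring_scope.

Section Defs.
Variable R : realType.

Definition deltaR (r : nat) : R := (r%:R : R) `^ (- (7%:R / 2%:R)).
Definition sigmaR (r : nat) : R := Num.sqrt (ln (deltaR r)^-1) / r%:R.
Definition gammaR (r : nat) : R := Num.sqrt (5%:R / 2%:R * ln (r%:R : R)).
Definition bigR (d r : nat) : R :=
  1 + gammaR r * (2%:R + Num.sqrt 2%:R) * Num.sqrt (d%:R : R) * sigmaR r.
Definition bR (d r : nat) : R := (bigR d r + 1) ^+ 2 / (4%:R * sigmaR r ^+ 2).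

Definition theta (b del : R) : int :=
  Num.ceil (Num.max (b * expR 1 ^+ 2 / 2%:R) (ln (2%:R / del))).
Definition sdeg (b del : R) : int :=
  Num.ceil (Num.sqrt (2%:R * (theta b del)%:~R * ln (4%:R / del))).

Definition is_s_poly (b del : R) (s : {poly R}) : Prop :=
  (size s).-1 = `|sdeg b del|%N /\
  forall t : R, 0 <= t <= b -> `|expR (- t) - s.[t]| <= del.

Definition Kr (sig : R) (s : {poly R}) (x y : R) : R :=
  (Num.sqrt (2%:R * pi) * sig)^-1 * (s.[(x - y) ^+ 2 / (4%:R * sig ^+ 2)]) ^+ 2.
End Defs.

From HB Require Import structures.
From mathcomp Require Import all_boot all_order all_algebra.
From mathcomp Require Import all_classical all_reals all_analysis.
From mathcomp Require Import ring lra.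
Import Order.TTheory GRing.Theory Num.Theory.
Local Open Scope ring_scope.

(* Writing t = (x - y)^2 / (4 sigma^2), the Gaussian is exp(-t)^2 while K_r is
   s(t)^2.  The hypotheses on x, y and b put t in [0, b], where s(t) is
   delta-close to exp(-t) <= 1, and squaring at most triples the error:
   |s^2 - e^2| = |s - e| |s + e| <= delta (2 + delta) <= 3 delta. *)

Lemma sqr_approx_le (R : realDomainType) (e s del : R) :
  0 <= e <= 1 -> del <= 1 -> `|e - s| <= del -> `|s ^+ 2 - e ^+ 2| <= 3%:R * del.
Proof.
move=> /andP[e0 e1] del1; rewrite !ler_norml => /andP[lo hi].
apply/andP; split; nra.
Qed.

Lemma sqr_subr_le (R : realDomainType) (a x y : R) :
  -1 <= x <= 1 -> - a <= y <= a -> (x - y) ^+ 2 <= (a + 1) ^+ 2.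
Proof. by move=> /andP[? ?] /andP[? ?]; nra. Qed.

Lemma powR_lt1 (R : realType) (a p : R) : 1 < a -> p < 0 -> a `^ p < 1.
Proof.
move=> a1 p0; rewrite /powR gt_eqF ?(lt_trans ltr01) //.
by rewrite expR_lt1 nmulr_rlt0 // ln_gt0.
Qed.

Section DeltaSigma.
Variables (R : realType) (r : nat).

Lemma deltaR_gt0 : (0 < r)%N -> 0 < deltaR R r.
Proof. by move=> r0; apply: powR_gt0; rewrite ltr0n. Qed.

Lemma deltaR_lt1 : (1 < r)%N -> deltaR R r < 1.
Proof.
move=> r1; apply: powR_lt1; first by rewrite ltr1n.
by rewrite oppr_lt0 divr_gt0 ?ltr0n.
Qed.

Lemma sigmaR_gt0 : (1 < r)%N -> 0 < sigmaR R r.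
Proof.
move=> r1; have r0 : (0 < r)%N by apply: ltn_trans r1.
rewrite /sigmaR divr_gt0 ?ltr0n // sqrtr_gt0 ln_gt0 //.
by rewrite invf_gt1 ?deltaR_gt0 ?deltaR_lt1.
Qed.

End DeltaSigma.

Lemma expRN_mul2 (R : realType) (t : R) : expR (- (2%:R * t)) = expR (- t) ^+ 2.
Proof. by rewrite -mulrN expRM_natl. Qed.

Lemma Kr_gauss_approx (R : realType) (sig del b : R) (s : {poly R}) (x y : R) :
  0 < sig -> del <= 1 ->
  (forall t : R, 0 <= t <= b -> `|expR (- t) - s.[t]| <= del) ->
  (x - y) ^+ 2 / (4%:R * sig ^+ 2) <= b ->
  `| Kr sig s x y - (Num.sqrt (2%:R * pi) * sig)^-1
                    * expR (- ((x - y) ^+ 2 / (2%:R * sig ^+ 2))) |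
  <= 3%:R * del / (Num.sqrt (2%:R * pi) * sig).
Proof.
move=> sig0 del1 s_approx tb.
set t := (x - y) ^+ 2 / (4%:R * sig ^+ 2) in tb.
have t0 : 0 <= t by rewrite divr_ge0 ?sqr_ge0 // mulr_ge0 ?sqr_ge0.
have -> : (x - y) ^+ 2 / (2%:R * sig ^+ 2) = 2%:R * t.
  by rewrite /t; field; rewrite gt_eqF.
have c0 : 0 < (Num.sqrt (2%:R * pi) * sig)^-1.
  by rewrite invr_gt0 mulr_gt0 // sqrtr_gt0 mulr_gt0 // pi_gt0.
rewrite /Kr -/t expRN_mul2 -mulrBr normrM (gtr0_norm c0) mulrC ler_wpM2r //.
  exact: ltW.
apply: sqr_approx_le del1 (s_approx t _); last by rewrite t0.
by rewrite expR_ge0 expR_le1 oppr_le0.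
Qed.

Theorem lemma12 (R : realType) (d r : nat) (hr : (2 <= r)%N) (s : {poly R})
  (hs : is_s_poly (bR R d r) (deltaR R r) s) (x y : R) :
  -1 <= x <= 1 -> - bigR R d r <= y <= bigR R d r ->
  `| Kr (sigmaR R r) s x y
     - (Num.sqrt (2%:R * pi) * sigmaR R r)^-1
       * expR (- ((x - y) ^+ 2 / (2%:R * sigmaR R r ^+ 2))) |
  <= 3%:R * deltaR R r / (Num.sqrt (2%:R * pi) * sigmaR R r).
Proof.
move=> hx hy; have [_ s_approx] := hs.
apply: (Kr_gauss_approx _ _ _ (bR R d r)).
- exact: sigmaR_gt0.
- exact/ltW/deltaR_lt1.
- exact: s_approx.
- rewrite /bR ler_wpM2r ?invr_ge0 ?mulr_ge0 ?sqr_ge0 //.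
  exact: sqr_subr_le.
Qed.
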